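(* Let $p$ be a program. Then $p$ is in $\to_{\mathrm{ond}}$-normal form (there is no $q$ with $p\to_{\mathrm{ond}} q$) if and only if $\mathrm{onorm}(p)$.
   Context: Syntax (split presentation). Terms: $t,u,s ::= x \mid \lambda x.t \mid t\,u$. Values: $v ::= \lambda x.t$ (variables are not values). Environments: $E ::= \epsilon \mid E[x\leftarrow t]$. Programs: $p ::= (t,E)$. In $E[x\leftarrow t]$ and $(u,E[x\leftarrow t])$ the variable $x$ is bound in $E$ and $u$; everything is up to $\alpha$-renaming, appended ES bind fresh variables. Appending: $(t,E)@[x\leftarrow u] := (t,E[x\leftarrow u])$. Inert terms and fireballs: $i ::= x \mid i\,f$, $f ::= v \mid i$. Open term evaluation contexts: $\mathcal{H} ::= \langle\cdot\rangle \mid \mathcal{H}\,t \mid i\,\mathcal{H}$. Term contexts: $C ::= \langle\cdot\rangle \mid C\,t \mid t\,C$. Environment contexts: $G ::= E[x\leftarrow C] \mid G[x\leftarrow u]$. Program contexts: $P ::= (C,E) \mid (t,G)$, with $(C,E)@[x\leftarrow u] := (C,E[x\leftarrow u])$, $(t,G)@[x\leftarrow u] := (t,G[x\leftarrow u])$. Plugging: $(C,E)\langle (t,E')\rangle := (C\langle t\rangle, E'E)$; $(u,E[x\leftarrow C])\langle (t,E')\rangle := (u, E[x\leftarrow C\langle t\rangle]E')$; $(u,G[x\leftarrow s])\langle (t,E)\rangle := ((u,G)\langle(t,E)\rangle)@[x\leftarrow s]$; $P\langle t\rangle := P\langle (t,\epsilon)\rangle$. For $p=(t,E)$, $p@[x\leftarrow\mathcal{H}]$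 denotes the program context $(t,E[x\leftarrow\mathcal{H}])$. Look-up $P(x)$: $P(x)=t$ if the list of ES of $P$ contains $[x\leftarrow t]$ with $t$ a term, $\bot$ otherwise. $v^{\alpha}$ is a copy of $v$ with fresh bound variables. Needed variables: $nv(x)=\{x\}$, $nv(\lambda x.t)=\emptyset$, $nv(t\,u)=nv(t)\cup nv(u)$; $nv((t,\epsilon))=nv(t)$, $nv((t,E[x\leftarrow u]))=nv((t,E))$ if $x\notin nv((t,E))$, else $(nv((t,E))\setminus\{x\})\cup nv(u)$; $nv(\langle\cdot\rangle)=\emptyset$, $nv(\mathcal{H}\,t)=nv(\mathcal{H})$, $nv(i\,\mathcal{H})=nv(i)\cup nv(\mathcal{H})$. Open evaluation contexts $P\in\mathcal{E}_{{\mathcal{V}}}$, inductively: $(\mathcal{H},\epsilon)\in\mathcal{E}_{nv(\mathcal{H})}$; if $P\in\mathcal{E}_{{\mathcal{V}}}$, $x\in{\mathcal{V}}$, $i$ inert then $P@[x\leftarrow i]\in\mathcal{E}_{({\mathcal{V}}\setminus\{x\})\cup nv(i)}$; if $P\in\mathcal{E}_{{\mathcal{V}}}$, $x\notin{\mathcal{V}}$ then $P@[x\leftarrow t]\in\mathcal{E}_{{\mathcal{V}}}$; if $P\in\mathcal{E}_{{\mathcal{V}}}$, $x\notin{\mathcal{V}}$ then $P\langle x\rangle@[x\leftarrow\mathcal{H}]\in\mathcal{E}_{{\mathcal{V}}\cup nv(\mathcal{H})}$ ($x$ not in the domain of $P$). Open CbNeed rules, for $P\in\mathcal{E}_{{\mathcal{V}}}$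 for some ${\mathcal{V}}$: $P\langle(\lambda x.t)u\rangle \to_{\mathrm{om}} P\langle (t,[x\leftarrow u])\rangle$; $P\langle x\rangle\to_{\mathrm{oe}} P\langle v^{\alpha}\rangle$ if $P(x)=v$; $\to_{\mathrm{ond}} := \to_{\mathrm{om}}\cup\to_{\mathrm{oe}}$. Predicates on programs, inductively: $\mathrm{inert}((i,\epsilon))$ for $i$ inert; if $\mathrm{inert}(p)$ and $x\in nv(p)$ then $\mathrm{inert}(p@[x\leftarrow i])$ for $i$ inert; if $\mathrm{inert}(p)$ and $x\notin nv(p)$ then $\mathrm{inert}(p@[x\leftarrow t])$ for any $t$. $\mathrm{abs}((v,\epsilon))$ for $v$ a value; if $\mathrm{abs}(p)$ then $\mathrm{abs}(p@[x\leftarrow t])$ for any $t$. $\mathrm{onorm}(p)$ iff $\mathrm{inert}(p)$ or $\mathrm{abs}(p)$. *)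

From mathcomp Require Import all_boot.
Set Implicit Arguments.
Unset Strict Implicit.
Unset Printing Implicit Defensive.

Inductive term : Type :=
| Var : nat -> term
| Lam : nat -> term -> term
| App : term -> term -> term.

Definition is_value (t : term) : Prop := exists x b, t = Lam x b.

(* Environments.  Storage convention: the HEAD of the list is the OUTERMOST
   explicit substitution, i.e.  E[x<-t]  is  (x,t) :: E.                    *)
Definition env := list (nat * term).
Definition program := (term * env)%type.

Definition papp (p : program) (x : nat) (u : term) : program :=
  (p.1, (x, u) :: p.2).

Inductive inert : term -> Prop :=
| inert_var x : inert (Var x)
| inert_app i f : inert i -> fireball f -> inert (App i f)
with fireball : term -> Prop :=
| fb_val x t : fireball (Lam x t)
| fb_inert i : inert i -> fireball i.

Inductive hctx : Type :=
| HHole : hctx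
| HAppL : hctx -> term -> hctx
| HAppR : term -> hctx -> hctx.

Fixpoint hctx_ok (H : hctx) : Prop :=
  match H with
  | HHole => True
  | HAppL H _ => hctx_ok H
  | HAppR i H => inert i /\ hctx_ok H
  end.

Fixpoint hplug (H : hctx) (t : term) : term :=
  match H with
  | HHole => t
  | HAppL H u => App (hplug H t) u
  | HAppR i H => App i (hplug H t)
  end.

Fixpoint nv (t : term) : pred nat :=
  match t with
  | Var x => fun y => y == x
  | Lam _ _ => fun _ => false
  | App t u => fun y => nv t y || nv u y
  end.

Fixpoint nvp_env (t : term) (E : env) : pred nat :=
  match E with
  | [::] => nv t
  | (x, u) :: E' =>
      let V := nvp_env t E' in
      if V x then (fun y => ((y != x) && V y) || nv u y) else V
  end.

Definition nvp (p : program) : pred nat := nvp_env p.1 p.2.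

Fixpoint nvh (H : hctx) : pred nat :=
  match H with
  | HHole => fun _ => false
  | HAppL H _ => nvh H
  | HAppR i H => fun y => nv i y || nvh H y
  end.

(* Program contexts whose holes are in evaluation position (these are the
   only ones that occur in the open evaluation contexts E_V):
     PTm H E            represents  (H, E)
     PES u Ein y H Eout represents  (u, Ein [y <- H] Eout)
   (Eout stored outermost-first, as for environments). *)
Inductive pctx : Type :=
| PTm : hctx -> env -> pctx
| PES : term -> env -> nat -> hctx -> env -> pctx.

Definition pctx_app (P : pctx) (x : nat) (u : term) : pctx :=
  match P with
  | PTm H E => PTm H ((x, u) :: E)
  | PES t Ein y H Eout => PES t Ein y H ((x, u) :: Eout)
  end.

(* plugging  P<(t,E')>:
   (C,E)<(t,E')> = (C<t>, E'E);  (u,E[y<-C]E'')<(t,E')> = (u, E[y<-C<t>]E'E'') *)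
Definition plug (P : pctx) (q : program) : program :=
  match P with
  | PTm H E => (hplug H q.1, E ++ q.2)
  | PES u Ein y H Eout => (u, Eout ++ q.2 ++ (y, hplug H q.1) :: Ein)
  end.

Definition plugt (P : pctx) (t : term) : program := plug P (t, [::]).

(* look-up in an environment: the innermost (= last stored) binding of x *)
Fixpoint env_lookup (x : nat) (E : env) : option term :=
  match E with
  | [::] => None
  | (y, t) :: E' =>
      match env_lookup x E' with
      | Some t' => Some t'
      | None => if y == x then Some t else None
      end
  end.

(* P(x): look-up among the ES of P (with a term, not a context) whose scope
   contains the hole. *)
Definition plookup (P : pctx) (x : nat) : option term :=
  match P with
  | PTm _ E => env_lookup x E
  | PES _ _ _ _ Eout => env_lookup x Eout
  end.

Definition pdom (P : pctx) : seq nat :=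
  match P with
  | PTm _ E => map fst E
  | PES _ _ _ _ Eout => map fst Eout
  end.

Inductive evctx : pctx -> pred nat -> Prop :=
| ev_base H : hctx_ok H -> evctx (PTm H [::]) (nvh H)
| ev_inert P V x i :
    evctx P V -> V x -> inert i ->
    evctx (pctx_app P x i) (fun y => ((y != x) && V y) || nv i y)
| ev_skip P V x t :
    evctx P V -> ~~ V x -> evctx (pctx_app P x t) V
| ev_hole P V x H :
    evctx P V -> ~~ V x -> hctx_ok H -> x \notin pdom P ->
    evctx (PES (plugt P (Var x)).1 (plugt P (Var x)).2 x H [::])
          (fun y => V y || nvh H y).

Inductive om : program -> program -> Prop :=
| om_step P V x t u :
    evctx P V ->
    om (plugt P (App (Lam x t) u)) (plug P (t, [:: (x, u)])).

Inductive oe : program -> program -> Prop :=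
| oe_step P V x v :
    evctx P V -> plookup P x = Some v -> is_value v ->
    oe (plugt P (Var x)) (plugt P v).

Definition ond (p q : program) : Prop := om p q \/ oe p q.

Inductive inertp : program -> Prop :=
| ip_base i : inert i -> inertp (i, [::])
| ip_inert p x i : inertp p -> nvp p x -> inert i -> inertp (papp p x i)
| ip_skip p x t : inertp p -> ~~ nvp p x -> inertp (papp p x t).

Inductive absp : program -> Prop :=
| ab_base v : is_value v -> absp (v, [::])
| ab_ext p x t : absp p -> absp (papp p x t).

Definition onorm (p : program) : Prop := inertp p \/ absp p.

From mathcomp Require Import all_boot.
From Stdlib Require Import Classical.

(* Progress, by induction on the environment: a step of (t, E) survives an
   outer substitution [x <- u] unless x is needed and u is not inert.  In that
   case x sits at the hole of some P in E_W with x not in W, so either u is an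
   abstraction, which can be substituted for this occurrence, or u contains a
   redex under an open evaluation context, which the last formation rule of
   E_V reaches.  Locating x requires a stronger invariant: every set S of
   needed variables has a member at a hole whose context needs no variable
   of S (a leftmost member); it is preserved by each formation rule of
   inert programs and of evaluation contexts.
   Conversely, an evaluation context of an inert program holds a fireball at
   its hole and binds the variables there to inert terms, so no redex and no
   value is exposed; in an abstraction program the hole can only be the
   abstraction itself. *)

Set Implicit Arguments.
Unset Strict Implicit.
Unset Printing Implicit Defensive.

Lemma plugt_pctx_app P x u r : plugt (pctx_app P x u) r = papp (plugt P r) x u.
Proof. by case: P. Qed.

Lemma plugt_PES (p : program) x H r :
  plugt (PES p.1 p.2 x H [::]) r = papp p x (hplug H r).
Proof. by []. Qed.

Lemma pdom_pctx_app P x u : pdom (pctx_app P x u) = x :: pdom P.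
Proof. by case: P. Qed.

Lemma plookup_pctx_app P x u y : plookup (pctx_app P x u) y =
  if plookup P y is Some t then Some t else if x == y then Some u else None.
Proof. by case: P. Qed.

Lemma env_lookup_None y E : env_lookup y E = None <-> y \notin map fst E.
Proof.
elim: E => [|[x t] E IH] //=; rewrite in_cons negb_or.
case: (env_lookup y E) IH => [t'|] IH; first by split=> // /andP[_ /IH].
by rewrite (proj1 IH erefl) andbT; case: eqVneq.
Qed.

Lemma plookup_None P y : plookup P y = None <-> y \notin pdom P.
Proof. by case: P => * /=; apply: env_lookup_None. Qed.

Lemma nvp_papp p x u z : nvp (papp p x u) z =
  if nvp p x then ((z != x) && nvp p z) || nv u z else nvp p z.
Proof. by rewrite /nvp /=; case: (nvp_env _ _ x). Qed.

Lemma nv_hplug H r z : nv r z -> nv (hplug H r) z.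
Proof. by elim: H => [|H IH t|i H IH] //= /IH ->; rewrite ?orbT. Qed.

Lemma fireball_or_redex t : fireball t \/
  exists H a b c, hctx_ok H /\ t = hplug H (App (Lam a b) c).
Proof.
elim: t => [x|x b _|t1 [F1|[H [a [b [c [HH ->]]]]]] t2 IH2].
- by left; do 2!constructor.
- by left; constructor.
- case: F1 => [a b|i Hi]; first by right; exists HHole, a, b, t2.
  case: IH2 => [F2|[H [a [b [c [HH ->]]]]]]; first by left; do 2!constructor.
  by right; exists (HAppR i H), a, b, c.
- by right; exists (HAppL H t2), a, b, c.
Qed.

Lemma fireball_hplug H r : hctx_ok H -> fireball (hplug H r) -> fireball r.
Proof.
elim: H => [|H IH t|i H IH] //= Hok F; inversion F as [|? Hi]; inversion Hi.
- by apply: IH => //; apply: fb_inert.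
- by apply: IH; case: Hok.
Qed.

Lemma redex_not_fireball a b c : ~ fireball (App (Lam a b) c).
Proof.
by move=> F; inversion F as [|? Hi]; inversion Hi as [|? ? Hl]; inversion Hl.
Qed.

Definition at_hole (p : program) (y : nat) (W : pred nat) : Prop :=
  exists Q, [/\ evctx Q W, y \notin pdom Q & plugt Q (Var y) = p].

Lemma at_hole_base H y : hctx_ok H -> at_hole (hplug H (Var y), [::]) y (nvh H).
Proof. by exists (PTm H [::]); split=> //; apply: ev_base. Qed.

Lemma at_hole_skip p y W x u :
  at_hole p y W -> ~~ W x -> y != x -> at_hole (papp p x u) y W.
Proof.
move=> [Q [HQ Qy <-]] Wx yx; exists (pctx_app Q x u).
by rewrite pdom_pctx_app in_cons negb_or yx plugt_pctx_app; split=> //; apply: ev_skip.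
Qed.

Lemma at_hole_inert p y W x i : at_hole p y W -> W x -> inert i -> y != x ->
  at_hole (papp p x i) y (fun z => ((z != x) && W z) || nv i z).
Proof.
move=> [Q [HQ Qy <-]] Wx Hi yx; exists (pctx_app Q x i).
by rewrite pdom_pctx_app in_cons negb_or yx plugt_pctx_app; split=> //; apply: ev_inert.
Qed.

Lemma at_hole_PES p x W H y : at_hole p x W -> ~~ W x -> hctx_ok H ->
  at_hole (papp p x (hplug H (Var y))) y (fun z => W z || nvh H z).
Proof.
move=> [Q [HQ Qx <-]] Wx Hok.
by exists (PES (plugt Q (Var x)).1 (plugt Q (Var x)).2 x H [::]); split=> //; apply: ev_hole.
Qed.

Lemma at_hole_step p x W u : at_hole p x W -> ~~ W x -> ~ inert u ->
  exists q, ond (papp p x u) q.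
Proof.
move=> [Q [HQ Qx <-]] Wx Hu.
case: (fireball_or_redex u) Hu => [[a b _|i Hi /(_ Hi) []]|[H [a [b [c [Hok ->]]]]] _].
- exists (plugt (pctx_app Q x (Lam a b)) (Lam a b)); right; rewrite -plugt_pctx_app.
  apply: (oe_step (ev_skip _ HQ Wx)); last by exists a, b.
  by rewrite plookup_pctx_app (proj2 (plookup_None Q x) Qx) eqxx.
- pose P := PES (plugt Q (Var x)).1 (plugt Q (Var x)).2 x H [::].
  exists (plug P (b, [:: (a, c)])); left; rewrite -plugt_PES.
  exact: (om_step a b c (ev_hole HQ Wx Hok Qx)).
Qed.

Definition meets (S : nat -> Prop) (N : pred nat) : Prop := exists2 y, S y & N y.

Definition avoids (S : nat -> Prop) (N : pred nat) : Prop := forall z, S z -> ~~ N z.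

Lemma not_meets_avoids S N : ~ meets S N -> avoids S N.
Proof. by move=> SN z Sz; apply/negP => Nz; apply: SN; exists z. Qed.

Lemma meets_orr S N1 N2 :
  meets S (fun z => N1 z || N2 z) -> ~ meets S N1 -> meets S N2.
Proof. by move=> [y Sy /orP[N1y|N2y]] SN1; [case: SN1; exists y | exists y]. Qed.

(* [avoids S W] makes y a leftmost member of S: the context of the hole needs
   no variable of S, in particular not y itself, as required by [ev_hole]. *)
Definition leftmost {T : Type} (hole : T -> nat -> pred nat -> Prop)
    (S : nat -> Prop) (N : pred nat) (p : T) : Prop :=
  exists y W, [/\ S y, N y, hole p y W, avoids S W & subpred W N].

Lemma leftmost_sub (T : Type) (hole : T -> nat -> pred nat -> Prop) S N N' p :
  subpred N N' -> leftmost hole S N p -> leftmost hole S N' p.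
Proof.
move=> NN' [y [W [Sy Ny Hp SW WN]]]; exists y, W.
by split=> // [|z /WN]; apply: NN'.
Qed.

Definition hctx_hole (t : term) (y : nat) (W : pred nat) : Prop :=
  exists H, [/\ hctx_ok H, hplug H (Var y) = t & nvh H = W].

Lemma leftmost_AppL S N t u :
  leftmost hctx_hole S N t -> leftmost hctx_hole S N (App t u).
Proof.
move=> [y [_ [Sy Ny [H [Hok <- <-]] SH HN]]].
by exists y, (nvh H); split=> //; exists (HAppL H u).
Qed.

Lemma leftmost_AppR S N i t : inert i -> ~ meets S (nv i) ->
  leftmost hctx_hole S N t -> leftmost hctx_hole S (fun z => nv i z || N z) (App i t).
Proof.
move=> Hi /not_meets_avoids Si [y [_ [Sy Ny [H [Hok <- <-]] SH HN]]].
exists y, (nvh (HAppR i H)); split=> //=; first by rewrite Ny orbT.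
- by exists (HAppR i H).
- by move=> z Sz; rewrite negb_or Si ?SH.
- by move=> z /orP[->|/HN ->]; rewrite ?orbT.
Qed.

Lemma inert_leftmost S i : inert i -> meets S (nv i) -> leftmost hctx_hole S (nv i) i.
Proof.
elim: i => [x|x b _|i1 IH1 i2 IH2] Hi Si.
- case: Si => y Sy /eqP yx; subst y; exists x, (nvh HHole).
  by split=> //=; exists HHole.
- by inversion Hi.
- have [Hi1 Hf2] : inert i1 /\ fireball i2 by inversion Hi.
  case: (classic (meets S (nv i1))) => [Si1|Si1].
  + apply: leftmost_AppL; apply: leftmost_sub (IH1 Hi1 Si1).
    by move=> z /= ->.
  + have Si2 := meets_orr Si Si1.
    case: Hf2 IH2 Si2 => [a b _ [y _]//|i2' Hi2 IH2 Si2].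
    exact: leftmost_AppR (IH2 Hi2 Si2).
Qed.

Lemma hctx_leftmost S H r :
  hctx_ok H -> meets S (nvh H) -> leftmost hctx_hole S (nvh H) (hplug H r).
Proof.
elim: H => [|H IH t|i H IH] /= Hok SH; first by case: SH.
- exact/leftmost_AppL/IH.
- case: Hok => Hi Hok; case: (classic (meets S (nv i))) => [Si|Si].
  + apply: leftmost_AppL; apply: leftmost_sub (inert_leftmost Hi Si).
    by move=> z /= ->.
  + exact: leftmost_AppR (IH Hok (meets_orr SH Si)).
Qed.

Definition needed_at_hole (N : pred nat) (p : program) : Prop :=
  forall S, meets S N -> leftmost at_hole S N p.

Lemma needed_at_hole_eq N N' p :
  needed_at_hole N p -> N =1 N' -> needed_at_hole N' p.
Proof.
move=> Np NN' S [y Sy N'y].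
by apply: leftmost_sub (Np S _) => [z|]; [rewrite NN' | exists y; rewrite ?NN'].
Qed.

Lemma leftmost_skip S N p x u :
  leftmost at_hole S N p -> ~~ N x -> leftmost at_hole S N (papp p x u).
Proof.
move=> [y [W [Sy Ny Hp SW WN]]] Nx; exists y, W; split=> //.
apply: at_hole_skip Hp _ _; first by apply: contra Nx; apply: WN.
by apply: contraNneq Nx => <-.
Qed.

Lemma needed_at_hole_skip N p x u :
  needed_at_hole N p -> ~~ N x -> needed_at_hole N (papp p x u).
Proof. by move=> Np Nx S SN; apply: leftmost_skip (Np S SN) Nx. Qed.

Lemma needed_at_hole_inert N p x i : needed_at_hole N p -> N x -> inert i ->
  needed_at_hole (fun z => ((z != x) && N z) || nv i z) (papp p x i).
Proof.
move=> Np Nx Hi S [y0 Sy0 N'y0].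
(* A member of S needed by i is reached through the occurrence of x. *)
pose S1 z := if z == x then meets S (nv i) else S z.
have S1N : meets S1 N.
  case: (classic (meets S (nv i))) => Si; first by exists x; rewrite /S1 ?eqxx.
  case/orP: N'y0 => [/andP[y0x Ny0]|iy0]; last by case: Si; exists y0.
  by exists y0; rewrite /S1 ?(negbTE y0x).
have [y [W [S1y Ny Hp S1W WN]]] := Np S1 S1N.
have SW z : S z -> z != x -> ~~ W z.
  by move=> Sz zx; apply: S1W; rewrite /S1 (negbTE zx).
have WN' z : ~~ W x -> W z -> (z != x) && N z.
  by move=> Wx Wz; rewrite WN // andbT; apply: contraNneq Wx => <-.
case: (eqVneq y x) S1y => [yx | yx]; rewrite /S1.
- subst y; rewrite eqxx => Si.
  have Wx : ~~ W x by apply: S1W; rewrite /S1 eqxx.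
  have [y' [_ [Sy' iy' [H [Hok Hpl <-]] SH HN]]] := inert_leftmost Hi Si.
  exists y', (fun z => W z || nvh H z); split=> //; first by rewrite /= iy' orbT.
  + by rewrite -Hpl; apply: at_hole_PES.
  + move=> z Sz; rewrite negb_or SH // andbT.
    by case: (eqVneq z x) => [->|]; last apply: SW.
  + by move=> z /orP[/(WN' _ Wx) ->|/HN ->]; rewrite ?orbT.
- rewrite (negbTE yx) => Sy.
  have N'y : ((y != x) && N y) || nv i y by rewrite yx Ny.
  have [Wx|Wx] := boolP (W x).
  + have /not_meets_avoids Si : ~ meets S (nv i).
      by move=> Si; move: (S1W x); rewrite /S1 eqxx Wx => /(_ Si).
    exists y, (fun z => ((z != x) && W z) || nv i z); split=> //.
    * exact: at_hole_inert.
    * move=> z Sz; rewrite negb_or Si // andbT negb_and.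
      by case: (eqVneq z x) => //= zx; apply: SW.
    * by move=> z /orP[/andP[-> /WN ->] | ->]; rewrite ?orbT.
  + exists y, W; split=> //; first exact: at_hole_skip.
    * by move=> z Sz; case: (eqVneq z x) => [->|]; last apply: SW.
    * by move=> z /(WN' _ Wx) ->.
Qed.

Lemma inertp_needed_at_hole p : inertp p -> needed_at_hole (nvp p) p.
Proof.
elim=> [i Hi|q x i _ IH Nx Hi|q x t _ IH Nx] S.
- move=> /(inert_leftmost Hi) [y [_ [Sy Ny [H [Hok Hpl <-]] SH HN]]].
  by exists y, (nvh H); split=> //; rewrite -Hpl; apply: at_hole_base.
- apply: needed_at_hole_eq (needed_at_hole_inert IH Nx Hi) _ S.
  by move=> z; rewrite nvp_papp Nx.
- apply: needed_at_hole_eq (needed_at_hole_skip t IH Nx) _ S.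
  by move=> z; rewrite nvp_papp (negbTE Nx).
Qed.

Lemma evctx_needed_at_hole P V r : evctx P V -> needed_at_hole V (plugt P r).
Proof.
move=> HP; elim: HP r => [H Hok|P' V' x i _ IH Vx Hi|P' V' x t _ IH Vx|
                          P' V' x H HP IH Vx Hok Px] r S.
- move=> /(hctx_leftmost r Hok) [y [_ [Sy Ny [H' [Hok' Hpl <-]] SH HN]]].
  by exists y, (nvh H'); split=> //; rewrite /plugt /= -Hpl; apply: at_hole_base.
- by rewrite plugt_pctx_app; apply: needed_at_hole_inert.
- by rewrite plugt_pctx_app; apply: needed_at_hole_skip.
- rewrite plugt_PES => SVH; case: (classic (meets S V')) => [SV|SV].
  + by apply: leftmost_sub (leftmost_skip _ (IH (Var x) S SV) Vx) => z /= ->.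
  + have [y [_ [Sy Hy [H' [Hok' Hpl <-]] SH HN]]] :=
      hctx_leftmost r Hok (meets_orr SVH SV).
    have HPx : at_hole (plugt P' (Var x)) x V' by exists P'.
    exists y, (fun z => V' z || nvh H' z); split=> //=; first by rewrite Hy orbT.
    * by rewrite -Hpl; apply: at_hole_PES.
    * by move=> z Sz; rewrite negb_or (not_meets_avoids SV) ?SH.
    * by move=> z /orP[-> | /HN ->]; rewrite ?orbT.
Qed.

Lemma needed_at_hole_step N p x u : needed_at_hole N p -> N x -> ~ inert u ->
  exists q, ond (papp p x u) q.
Proof.
move=> Np Nx Hu.
have [y [W [yx _ Hp SW _]]] := Np (fun z => z = x) (ex_intro2 _ _ x erefl Nx).
by subst y; apply: at_hole_step Hp (SW x erefl) Hu.
Qed.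

Lemma evctx_pctx_app_or_step P V x u r : evctx P V ->
  (exists V', evctx (pctx_app P x u) V') \/ exists q, ond (papp (plugt P r) x u) q.
Proof.
move=> HP; have [Vx|Vx] := boolP (V x); last by left; exists V; apply: ev_skip.
case: (classic (inert u)) => Hu; first by left; eexists; exact: ev_inert HP Vx Hu.
by right; apply: needed_at_hole_step (evctx_needed_at_hole r HP) Vx Hu.
Qed.

Lemma ond_papp p q x u : ond p q -> exists q', ond (papp p x u) q'.
Proof.
case=> [[P V y t s HP] | [P V y v HP Py Hv]].
- case: (evctx_pctx_app_or_step x u (App (Lam y t) s) HP) => [[V' HP'] | //].
  exists (plug (pctx_app P x u) (t, [:: (y, s)])); left.
  by rewrite -plugt_pctx_app; apply: om_step HP'.
- case: (evctx_pctx_app_or_step x u (Var y) HP) => [[V' HP'] | //].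
  exists (plugt (pctx_app P x u) v); right.
  rewrite -plugt_pctx_app; apply: oe_step HP' _ Hv.
  by rewrite plookup_pctx_app Py.
Qed.

Lemma onorm_papp p x u :
  onorm p -> (exists q, ond (papp p x u) q) \/ onorm (papp p x u).
Proof.
case=> [Hp | Hp]; last by right; right; apply: ab_ext.
have [Nx|Nx] := boolP (nvp p x); last by right; left; apply: ip_skip.
case: (classic (inert u)) => Hu; first by right; left; apply: ip_inert.
by left; apply: needed_at_hole_step (inertp_needed_at_hole Hp) Nx Hu.
Qed.

Lemma ond_or_onorm p : (exists q, ond p q) \/ onorm p.
Proof.
case: p => t E; elim: E => [|[x u] E [[q /(ond_papp x u) Hs] | /(onorm_papp x u) //]].
- case: (fireball_or_redex t) => [[a b | i Hi] | [H [a [b [c [Hok ->]]]]]].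
  + by right; right; constructor; exists a, b.
  + by right; left; constructor.
  + left; exists (plug (PTm H [::]) (b, [:: (a, c)])); left.
    exact: om_step (ev_base Hok).
- by left.
Qed.

Lemma inertp_nil t : inertp (t, [::]) -> inert t.
Proof. by move=> Ht; inversion Ht. Qed.

Lemma inertp_papp p x u : inertp (papp p x u) -> inertp p /\ (nvp p x -> inert u).
Proof.
case: p => t E Hp; inversion Hp as [|[t' E'] ? ? Hp' Nx Hu|[t' E'] ? ? Hp' Nx]; subst.
- by split.
- by split=> // N; rewrite N in Nx.
Qed.

Lemma nvp_plugt_var P V y : evctx P V -> y \notin pdom P -> nvp (plugt P (Var y)) y.
Proof.
move=> HP; elim: HP y => [H _|P' V' x u _ IH _ _|P' V' x u _ IH _|P' V' x H _ IH _ _ Px] y.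
- by rewrite /nvp /= => _; apply: nv_hplug; rewrite /= eqxx.
- rewrite pdom_pctx_app in_cons negb_or plugt_pctx_app nvp_papp.
  by case/andP=> /negbTE-> /IH->; case: ifP.
- rewrite pdom_pctx_app in_cons negb_or plugt_pctx_app nvp_papp.
  by case/andP=> /negbTE-> /IH->; case: ifP.
- by rewrite plugt_PES nvp_papp IH // => _; rewrite nv_hplug ?orbT //= eqxx.
Qed.

Lemma inertp_plugt_fireball P V r : evctx P V -> inertp (plugt P r) -> fireball r.
Proof.
move=> HP; elim: HP r => [H Hok|P' V' x i _ IH _ _|P' V' x t _ IH _|
                          P' V' x H HP _ _ Hok Px] r.
- by move/inertp_nil/fb_inert; apply: fireball_hplug.
- by rewrite plugt_pctx_app => /inertp_papp[/IH].
- by rewrite plugt_pctx_app => /inertp_papp[/IH].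
- rewrite plugt_PES => /inertp_papp[_ /(_ (nvp_plugt_var HP Px))].
  by move/fb_inert; apply: fireball_hplug.
Qed.

Lemma inertp_plookup_inert P V y v :
  evctx P V -> inertp (plugt P (Var y)) -> plookup P y = Some v -> inert v.
Proof.
move=> HP; elim: HP => [//|P' V' x i HP IH _ Hi|P' V' x t HP IH _|//];
  rewrite plugt_pctx_app plookup_pctx_app => /inertp_papp[/IH Py Ht];
  case E: (plookup P' y) Py => [t'|] Py; try exact: Py.
- by case: eqP => // _ [<-].
- case: eqP => // xy [<-]; apply: Ht; rewrite xy.
  exact/(nvp_plugt_var HP)/plookup_None.
Qed.

Lemma plugt_Lam P V r a b : evctx P V -> (plugt P r).1 = Lam a b -> r = Lam a b.
Proof.
move=> HP; elim: HP r => [[|H t|i H] _|P' V' x i _ IH _ _|P' V' x t _ IH _|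
                          P' V' x H _ IH _ _ _] r //=.
- by rewrite plugt_pctx_app; apply: IH.
- by rewrite plugt_pctx_app; apply: IH.
- by move/IH.
Qed.

Lemma inertp_normal p : inertp p -> ~ exists q, ond p q.
Proof.
move=> Hp [q Hs]; case: Hs Hp => [[P V x t u HP] | [P V x v HP Px [a [b Hv]]]] Hp.
- exact: redex_not_fireball (inertp_plugt_fireball HP Hp).
- by have := inertp_plookup_inert HP Hp Px; rewrite Hv => Hi; inversion Hi.
Qed.

Lemma absp_Lam p : absp p -> exists a b, p.1 = Lam a b.
Proof. by elim=> [v [a [b ->]]|q x t _ IH]; [exists a, b|]. Qed.

Lemma absp_normal p : absp p -> ~ exists q, ond p q.
Proof.
move=> /absp_Lam[a [b Hp]] [q Hs].
by case: Hs Hp => [[P V x t u HP] | [P V x v HP _ _]] /(plugt_Lam HP).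
Qed.

Theorem mainTheorem3 (p : program) :
  (~ exists q : program, ond p q) <-> onorm p.
Proof.
split; first by case: (ond_or_onorm p).
by case=> [/inertp_normal | /absp_normal].
Qed.
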